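(* Let $G$ be a bounded metric operator on $\mathcal H$ (with $G^{-1}$ possibly unbounded) and $S$ a closed densely defined operator in $\mathcal H$. Then for every $\zeta\in D(S^* )\cap D(G^{-1/2})$ such that $S^*\zeta\in D(G^{-1/2})$, there exists $\eta\in D(S^\#)$ such that $\widetilde G\eta=\zeta$ and $\widetilde G S^\#\eta=S^*\widetilde G\eta\,(=S^*\zeta)$.
   Context: A metric operator on a Hilbert space $\mathcal H$ is a self-adjoint operator $G$ with $\langle G\xi,\xi\rangle>0$ for all nonzero $\xi\in D(G)$. For bounded $G$, $\mathcal H(G)$ is the completion of $\mathcal H$ in the norm $\|\xi\|_G=\|G^{1/2}\xi\|$ with inner product $\langle\xi,\eta\rangle_G=\langle G\xi,\eta\rangle$, and $\widetilde G:\mathcal H(G)\to\mathcal H$ is the continuous extension of $G$. $S^\#$ is the adjoint of $S$ regarded as a densely defined operator in $\mathcal H(G)$ with domain $D(S)$; $S^*$ is the adjoint in $\mathcal H$. *)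

From mathcomp Require Import all_boot all_order all_algebra.
From mathcomp Require Import reals complex.
Set Implicit Arguments. Unset Strict Implicit. Unset Printing Implicit Defensive.
Import Order.TTheory GRing.Theory Num.Theory.
Local Open Scope ring_scope.

(** A Hilbert space over the scalar field [C] is an [lmodType C] together with
    an inner product [ip], linear in the FIRST argument and conjugate-linear
    in the second (the convention ⟨Gξ,ξ⟩ of the paper), complete for the norm
    [ipnorm x = sqrt (ip x x)]. *)

Section Hilbert.
Variables (C : numClosedFieldType) (V : lmodType C) (ip : V -> V -> C).

Definition inner_product : Prop :=
  [/\ forall (a : C) (x y z : V), ip (a *: x + y) z = a * ip x z + ip y z,
      forall x y : V, ip y x = Num.conj (ip x y),
      forall x : V, 0 <= ip x x &
      forall x : V, ip x x = 0 -> x = 0].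

Definition ipnorm (x : V) : C := sqrtC (ip x x).

Definition cauchy_seq (u : nat -> V) : Prop :=
  forall e : C, 0 < e -> exists N : nat, forall m n : nat,
    (N <= m)%N -> (N <= n)%N -> ipnorm (u m - u n) < e.

Definition seq_conv (u : nat -> V) (l : V) : Prop :=
  forall e : C, 0 < e -> exists N : nat, forall n : nat,
    (N <= n)%N -> ipnorm (u n - l) < e.

Definition hilbert : Prop :=
  inner_product /\ forall u, cauchy_seq u -> exists l, seq_conv u l.

Definition subspace (D : V -> Prop) : Prop :=
  D 0 /\ forall (a : C) x y, D x -> D y -> D (a *: x + y).

Definition dense (D : V -> Prop) : Prop :=
  forall (x : V) (e : C), 0 < e -> exists y, D y /\ ipnorm (x - y) < e.

(** ** (Possibly unbounded) operators in V: a domain [D] and an action [S]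
    (the values of [S] outside [D] are irrelevant). *)
Definition densely_defined (D : V -> Prop) (S : V -> V) : Prop :=
  [/\ subspace D, dense D &
      forall (a : C) x y, D x -> D y -> S (a *: x + y) = a *: S x + S y].

Definition closed_op (D : V -> Prop) (S : V -> V) : Prop :=
  forall (u : nat -> V) (x y : V), (forall n, D (u n)) ->
    seq_conv u x -> seq_conv (fun n => S (u n)) y -> D x /\ S x = y.

(** [adjoint D S y z] : y ∈ D(S^* ) and S^* y = z, where S^* is the Hilbert
    adjoint of (D,S) w.r.t. [ip]  (z is unique when D is dense). *)
Definition adjoint (D : V -> Prop) (S : V -> V) (y z : V) : Prop :=
  forall x, D x -> ip (S x) y = ip x z.

Definition linear_op (T : V -> V) : Prop :=
  forall (a : C) x y, T (a *: x + y) = a *: T x + T y.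

Definition bounded_op (T : V -> V) : Prop :=
  linear_op T /\ exists M : C, 0 <= M /\ forall x, ipnorm (T x) <= M * ipnorm x.

Definition self_adjoint_bounded (T : V -> V) : Prop :=
  bounded_op T /\ forall x y, ip (T x) y = ip x (T y).

Definition bounded_metric_operator (G : V -> V) : Prop :=
  self_adjoint_bounded G /\ forall x, x != 0 -> 0 < ip (G x) x.

(** [Gh] is THE positive square root G^{1/2} of the positive bounded
    operator G (it is unique). *)
Definition positive_sqrt (G Gh : V -> V) : Prop :=
  [/\ self_adjoint_bounded Gh, forall x, 0 <= ip (Gh x) x &
      forall x, Gh (Gh x) = G x].

(** domain of G^{-1/2} = (G^{1/2})^{-1}: the range of G^{1/2} *)
Definition dom_inv_sqrt (Gh : V -> V) (x : V) : Prop := exists y, Gh y = x.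

End Hilbert.

Section TwoSpaces.
Variables (C : numClosedFieldType) (V W : lmodType C)
  (ipV : V -> V -> C) (ipW : W -> W -> C).

Definition linear_map (f : V -> W) : Prop :=
  forall (a : C) x y, f (a *: x + y) = a *: f x + f y.

Definition bounded_map (f : V -> W) : Prop :=
  linear_map f /\ exists M : C, 0 <= M /\
    forall x, ipnorm ipW (f x) <= M * ipnorm ipV x.

End TwoSpaces.

(** ** The space H(G) and G~.
    [completion ip G ipK iota] : (K, ipK) is a Hilbert space and iota : H -> K
    is a linear map with ⟨iota x, iota y⟩_K = ⟨G x, y⟩ = ⟨x,y⟩_G and dense
    range; i.e. (K, iota) is (a model of) the completion H(G) of (H, ⟨.,.⟩_G).
    The completion is unique up to unitary equivalence. *)
Definition completion (C : numClosedFieldType) (H K : lmodType C)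
  (ip : H -> H -> C) (G : H -> H) (ipK : K -> K -> C) (iota : H -> K) : Prop :=
  [/\ hilbert ipK, linear_map iota,
      forall x y, ipK (iota x) (iota y) = ip (G x) y &
      dense ipK (fun k => exists x, iota x = k)].

Definition continuous_extension (C : numClosedFieldType) (H K : lmodType C)
  (ip : H -> H -> C) (G : H -> H) (ipK : K -> K -> C) (iota : H -> K)
  (Gt : K -> H) : Prop :=
  bounded_map ipK ip Gt /\ forall x, Gt (iota x) = G x.

(** [sharp ipK iota D S eta w] : eta ∈ D(S^#) and S^# eta = w, where S^# is
    the adjoint in H(G) of the operator S regarded in H(G), i.e. the operator
    with domain iota(D(S)) acting by iota x |-> iota (S x). *)
Definition sharp (C : numClosedFieldType) (H K : lmodType C)
  (ipK : K -> K -> C) (iota : H -> K) (D : H -> Prop) (S : H -> H)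
  (eta w : K) : Prop :=
  forall x, D x -> ipK (iota (S x)) eta = ipK (iota x) w.

(* Write zeta = G^{1/2} a.  The range of G^{1/2} is dense: for t > 0 small,
   T = 1 - t G satisfies 0 <= T <= 1, so the numbers <T^k a, a> decrease to a
   limit, which makes T^n a a Cauchy sequence; its limit is fixed by T, hence
   lies in ker G = 0.  Since a - T^n a = G^{1/2} x_n with
   x_n = t (G^{1/2} a + ... + G^{1/2} T^{n-1} a), G^{1/2} x_n tends to a.
   As |iota x|_G = |G^{1/2} x|, the sequence iota x_n is Cauchy in H(G), and its
   limit eta satisfies G~ eta = G^{1/2} a = zeta and <iota y, eta>_G = <y, zeta>
   for all y.  Doing the same for S^* zeta gives w, and then
   <iota (S x), eta>_G = <S x, zeta> = <x, S^* zeta> = <iota x, w>_G,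
   i.e. w = S^# eta. *)
From mathcomp Require Import all_boot all_order all_algebra.
From mathcomp Require Import reals complex classical_sets.
From mathcomp Require Import ring.
Import Order.TTheory GRing.Theory Num.Theory.
Local Open Scope ring_scope.
Set Implicit Arguments. Unset Strict Implicit. Unset Printing Implicit Defensive.

Section InnerProduct.
Variables (C : numClosedFieldType) (V : lmodType C) (ip : V -> V -> C).
Hypothesis ip_inner : inner_product ip.

Lemma ipAl a x y z : ip (a *: x + y) z = a * ip x z + ip y z.
Proof. by case: ip_inner. Qed.

Lemma ipC x y : ip y x = (ip x y)^*.
Proof. by case: ip_inner. Qed.

Lemma ipxx_ge0 x : 0 <= ip x x.
Proof. by case: ip_inner. Qed.

Lemma ipxx_eq0 x : ip x x = 0 -> x = 0.
Proof. by case: ip_inner => _ _ _; apply. Qed.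

Lemma ip0l z : ip 0 z = 0.
Proof.
have := ipAl 1 0 0 z; rewrite scale1r addr0 mul1r => /eqP.
by rewrite -subr_eq subrr eq_sym => /eqP.
Qed.

Lemma ipDl x y z : ip (x + y) z = ip x z + ip y z.
Proof. by rewrite -[x]scale1r ipAl mul1r scale1r. Qed.

Lemma ipZl a x z : ip (a *: x) z = a * ip x z.
Proof. by rewrite -[a *: x]addr0 ipAl ip0l addr0. Qed.

Lemma ipNl x z : ip (- x) z = - ip x z.
Proof. by rewrite -scaleN1r ipZl mulN1r. Qed.

Lemma ipBl x y z : ip (x - y) z = ip x z - ip y z.
Proof. by rewrite ipDl ipNl. Qed.

Lemma ip0r z : ip z 0 = 0.
Proof. by rewrite ipC ip0l conjC0. Qed.

Lemma ipDr x y z : ip z (x + y) = ip z x + ip z y.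
Proof. by rewrite ipC ipDl rmorphD /= -!ipC. Qed.

Lemma ipZr a x z : ip z (a *: x) = a^* * ip z x.
Proof. by rewrite ipC ipZl rmorphM /= -ipC. Qed.

Lemma ipNr x z : ip z (- x) = - ip z x.
Proof. by rewrite ipC ipNl rmorphN /= -ipC. Qed.

Lemma ipBr x y z : ip z (x - y) = ip z x - ip z y.
Proof. by rewrite ipDr ipNr. Qed.

Lemma ipxx_conj x : (ip x x)^* = ip x x.
Proof. by rewrite conj_Creal ?ger0_real ?ipxx_ge0. Qed.

Lemma ipnorm_ge0 x : 0 <= ipnorm ip x.
Proof. by rewrite sqrtC_ge0 ipxx_ge0. Qed.

Lemma ipnorm_sq x : ipnorm ip x ^+ 2 = ip x x.
Proof. by rewrite sqrtCK. Qed.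

Lemma ipnorm0 : ipnorm ip 0 = 0.
Proof. by rewrite /ipnorm ip0l sqrtC0. Qed.

Lemma ipnormN x : ipnorm ip (- x) = ipnorm ip x.
Proof. by rewrite /ipnorm ipNl ipNr opprK. Qed.

Lemma ipnormB x y : ipnorm ip (x - y) = ipnorm ip (y - x).
Proof. by rewrite -ipnormN opprB. Qed.

Lemma ipnormZ a x : ipnorm ip (a *: x) = `|a| * ipnorm ip x.
Proof.
rewrite /ipnorm ipZl ipZr mulrA -normCK sqrtCM ?nnegrE ?exprn_ge0 ?ipxx_ge0 //.
by rewrite sqrCK.
Qed.

Lemma ipnorm_gt0 x : x != 0 -> 0 < ipnorm ip x.
Proof.
move=> x_neq0; rewrite sqrtC_gt0 lt_def ipxx_ge0 andbT.
by apply: contra x_neq0 => /eqP/ipxx_eq0->.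
Qed.

Lemma norm_ip_le x y : `|ip x y| <= ipnorm ip x * ipnorm ip y.
Proof.
have [->|y_neq0] := eqVneq y 0; first by rewrite ip0r normr0 ipnorm0 mulr0.
set v := ip y y; set c := ip x y.
have v_gt0 : 0 < v by rewrite /v -ipnorm_sq exprn_gt0 ?ipnorm_gt0.
(* expand 0 <= |x - (c / v) y|^2 *)
have := ipxx_ge0 (x - (c / v) *: y).
rewrite !(ipBl, ipBr, ipZl, ipZr) -/v -/c (ipC x y) -/c rmorphM fmorphV /=.
rewrite ipxx_conj -/v.
have -> : ip x x - c^* / v * c - (c / v * c^* - c / v * (c^* / v * v)) =
          (ip x x * v - c * c^*) / v by field; rewrite gt_eqF.
rewrite pmulr_lge0 ?invr_gt0 // subr_ge0 -normCK => le_c2.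
rewrite -(ler_pXn2r (isT : (0 < 2)%N)) ?nnegrE ?mulr_ge0 ?ipnorm_ge0 //.
by rewrite exprMn !ipnorm_sq.
Qed.

Lemma ipnormD x y : ipnorm ip (x + y) <= ipnorm ip x + ipnorm ip y.
Proof.
rewrite -(ler_pXn2r (isT : (0 < 2)%N)) ?nnegrE ?addr_ge0 ?ipnorm_ge0 //.
rewrite ipnorm_sq sqrrD !ipnorm_sq !(ipDl, ipDr) (ipC x y).
set c := ip x y.
have cross : c + c^* <= 2 * (ipnorm ip x * ipnorm ip y).
  have -> : c + c^* = 2 * 'Re c by rewrite ReE mulrC divfK // pnatr_eq0.
  rewrite ler_pM2l ?ltr0n //; apply: le_trans (norm_ip_le x y).
  by case: (leif_Re_Creal c).
by rewrite -mulr_natl addrA lerD2r -addrA lerD2l.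
Qed.

End InnerProduct.

Section LinearMap.
Variables (C : numClosedFieldType) (V W : lmodType C) (f : V -> W).
Hypothesis f_lin : linear_map f.

Lemma linmap0 : f 0 = 0.
Proof.
have := f_lin 1 0 0; rewrite scale1r addr0 scale1r => /eqP.
by rewrite -subr_eq subrr eq_sym => /eqP.
Qed.

Lemma linmapD x y : f (x + y) = f x + f y.
Proof. by rewrite -[x]scale1r f_lin !scale1r. Qed.

Lemma linmapZ a x : f (a *: x) = a *: f x.
Proof. by rewrite -[a *: x]addr0 f_lin linmap0 addr0. Qed.

Lemma linmapB x y : f (x - y) = f x - f y.
Proof. by rewrite -scaleN1r linmapD linmapZ scaleN1r. Qed.

End LinearMap.

Lemma mul_lt_of_lt_div (C : numFieldType) (a x e : C) :
  0 <= a -> 0 <= x -> x < e / (a + 1) -> a * x < e.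
Proof.
move=> a_ge0 x_ge0 lt_x; have a1_gt0 : 0 < a + 1 by rewrite ltr_wpDl.
apply: (le_lt_trans (y := (a + 1) * x)); first by rewrite ler_wpM2r // lerDl.
by rewrite mulrC -ltr_pdivlMr.
Qed.

Section Convergence.
Variables (C : numClosedFieldType) (V W : lmodType C)
  (ipV : V -> V -> C) (ipW : W -> W -> C).
Hypotheses (ipV_inner : inner_product ipV) (ipW_inner : inner_product ipW).

Lemma eq_seq_conv u v l :
  (forall n, u n = v n) -> seq_conv ipV u l -> seq_conv ipV v l.
Proof.
by move=> uv u_l e e_gt0; have [N HN] := u_l e e_gt0; exists N => n /HN; rewrite uv.
Qed.

Lemma seq_conv_uniq u l1 l2 : seq_conv ipV u l1 -> seq_conv ipV u l2 -> l1 = l2.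
Proof.
move=> u_l1 u_l2; apply/eqP; apply: contraT => l12_neq.
have d_gt0 : 0 < ipnorm ipV (l1 - l2) by rewrite ipnorm_gt0 // subr_eq0.
have [N1 H1] := u_l1 _ (divr_gt0 d_gt0 (ltr0n _ 2)).
have [N2 H2] := u_l2 _ (divr_gt0 d_gt0 (ltr0n _ 2)).
set w := u (maxn N1 N2).
have := H1 _ (leq_maxl N1 N2); have := H2 _ (leq_maxr N1 N2); rewrite -/w.
move=> w_l2 w_l1; suff : ipnorm ipV (l1 - l2) < ipnorm ipV (l1 - l2) by rewrite ltxx.
apply: (le_lt_trans (y := ipnorm ipV (w - l1) + ipnorm ipV (w - l2))).
  by rewrite (ipnormB _ w l1) //; have := ipnormD ipV_inner (l1 - w) (w - l2);
    rewrite addrA subrK.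
by rewrite [X in _ < X]splitr ltrD.
Qed.

Lemma seq_convS u l : seq_conv ipV u l -> seq_conv ipV (fun n => u n.+1) l.
Proof.
by move=> u_l e e_gt0; have [N HN] := u_l e e_gt0; exists N => n Nn; apply/HN/ltnW.
Qed.

Lemma seq_conv_cauchy u l : seq_conv ipV u l -> cauchy_seq ipV u.
Proof.
move=> u_l e e_gt0; have [N HN] := u_l _ (divr_gt0 e_gt0 (ltr0n _ 2)).
exists N => m n Nm Nn.
apply: (le_lt_trans (y := ipnorm ipV (u m - l) + ipnorm ipV (u n - l))).
  by rewrite (ipnormB _ (u n)) //; have := ipnormD ipV_inner (u m - l) (l - u n);
    rewrite addrA subrK.
by rewrite [X in _ < X]splitr ltrD ?HN.
Qed.

Lemma bounded_map_seq_conv f u l : bounded_map ipV ipW f ->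
  seq_conv ipV u l -> seq_conv ipW (fun n => f (u n)) (f l).
Proof.
move=> [f_lin [M [M_ge0 f_le]]] u_l e e_gt0.
have [N HN] := u_l _ (divr_gt0 e_gt0 (ltr_wpDl M_ge0 ltr01)).
exists N => n Nn; rewrite -(linmapB f_lin).
exact: le_lt_trans (f_le _) (mul_lt_of_lt_div M_ge0 (ipnorm_ge0 _ _) (HN n Nn)).
Qed.

Lemma seq_conv_ip_eq u l v m y z : seq_conv ipV u l -> seq_conv ipW v m ->
  (forall n, ipV y (u n) = ipW z (v n)) -> ipV y l = ipW z m.
Proof.
move=> u_l v_m uv; apply/eqP; rewrite -subr_eq0 -normr_eq0; apply/eqP.
apply/le_anti; rewrite normr_ge0 andbT; apply/ler_addgt0Pr => e e_gt0.
rewrite add0r; apply: ltW.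
have e2_gt0 : 0 < e / 2 by rewrite divr_gt0.
have [N1 H1] := u_l _ (divr_gt0 e2_gt0 (ltr_wpDl (ipnorm_ge0 ipV_inner y) ltr01)).
have [N2 H2] := v_m _ (divr_gt0 e2_gt0 (ltr_wpDl (ipnorm_ge0 ipW_inner z) ltr01)).
set n := maxn N1 N2.
have -> : ipV y l - ipW z m = - ipV y (u n - l) + ipW z (v n - m).
  by rewrite (ipBr ipV_inner) (ipBr ipW_inner) uv opprB addrA subrK.
apply: le_lt_trans (ler_normD _ _) _; rewrite normrN [X in _ < X]splitr.
apply: ltrD; apply: le_lt_trans (norm_ip_le _ _ _) _ => //.
  by apply: mul_lt_of_lt_div; rewrite ?ipnorm_ge0 ?H1 ?leq_maxl.
by apply: mul_lt_of_lt_div; rewrite ?ipnorm_ge0 ?H2 ?leq_maxr.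
Qed.

End Convergence.

Lemma exists_near_inf (R : realType) (f : nat -> R[i]) :
  (forall n, 0 <= f n) -> forall e, 0 < e -> exists N, forall n, f N < f n + e.
Proof.
move=> f_ge0 e e_gt0.
pose g n := complex.Re (f n).
have fE n : f n = (g n)%:C%C by rewrite RRe_real ?ger0_real.
have eE : e = (complex.Re e)%:C%C by rewrite RRe_real ?gtr0_real.
have Re_e_gt0 : 0 < complex.Re e by rewrite -ltcR -eE.
have g_inf : has_inf (range g).
  split; first by exists (g 0%N), 0%N.
  by exists 0 => _ [n _ <-]; rewrite -lecR -fE.
have [_ [N _ <-] gN] := inf_adherent Re_e_gt0 g_inf.
exists N => n; rewrite eE !fE -rmorphD /= ltcR.
by apply: lt_le_trans gN _; rewrite lerD2r; apply: (ge_inf g_inf.2); exists n.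
Qed.

Lemma nat_even_or_odd k : exists j, k = (j + j)%N \/ k = (j + j).+1.
Proof.
exists k./2; rewrite addnn; set j := k./2.
by case: (odd k) (odd_double_half k) => <-; [right | left].
Qed.

Section SqrtRangeDense.
Variables (R : realType) (H : lmodType R[i]) (ip : H -> H -> R[i]).
Variables (G Gh : H -> H) (M : R[i]).
Hypotheses (ip_hilbert : hilbert ip) (G_metric : bounded_metric_operator ip G).
Hypothesis Gh_sqrt : positive_sqrt ip G Gh.
Hypotheses (M_ge0 : 0 <= M) (G_le : forall x, ipnorm ip (G x) <= M * ipnorm ip x).

Let ip_inner : inner_product ip. Proof. by case: ip_hilbert. Qed.
Let G_sym x y : ip (G x) y = ip x (G y). Proof. by case: G_metric => [[_ ->]]. Qed.
Let G_pos x : x != 0 -> 0 < ip (G x) x. Proof. by case: G_metric => _; apply. Qed.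
Let G_lin : linear_map G. Proof. by case: G_metric => [[[]]]. Qed.
Let Gh_lin : linear_map Gh. Proof. by case: Gh_sqrt => [[[]]]. Qed.
Let Gh_sym x y : ip (Gh x) y = ip x (Gh y). Proof. by case: Gh_sqrt => [[_ ->]]. Qed.
Let GhK x : Gh (Gh x) = G x. Proof. by case: Gh_sqrt => _ _ ->. Qed.

Let ip_GhGh y : ip (Gh y) (Gh y) = ip (G y) y.
Proof. by rewrite Gh_sym GhK G_sym. Qed.

(* t <= 1 / |G|, which makes 0 <= T <= 1 for T = 1 - t G below *)
Let t : R[i] := (M + 1)^-1.

Let t_gt0 : 0 < t. Proof. by rewrite invr_gt0 ltr_wpDl. Qed.
Let t_conj : t^* = t. Proof. by rewrite conj_Creal ?gtr0_real. Qed.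

Let ip_G_le y : t * ip (G y) y <= ip y y.
Proof.
have Gyy_ge0 : 0 <= ip (G y) y by rewrite -ip_GhGh ipxx_ge0.
have Gyy_le : ip (G y) y <= M * ip y y.
  rewrite -(ger0_norm Gyy_ge0); apply: le_trans (norm_ip_le ip_inner _ _) _.
  by rewrite -(ipnorm_sq ip) expr2 mulrA ler_wpM2r ?ipnorm_ge0.
apply: le_trans (ler_wpM2l (ltW t_gt0) Gyy_le) _.
rewrite mulrA ler_piMl ?ipxx_ge0 // mulrC ler_pdivrMr ?mul1r ?lerDl //.
by rewrite ltr_wpDl.
Qed.

Let T y := y - t *: G y.

Let T_lin : linear_map T.
Proof.
move=> b x y; rewrite /T (linmapD G_lin) (linmapZ G_lin) scalerDr scalerBr.
by rewrite scalerA mulrC -scalerA opprD addrACA.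
Qed.

Let T_sym x y : ip (T x) y = ip x (T y).
Proof.
rewrite /T (ipBl ip_inner) (ipBr ip_inner) (ipZl ip_inner) (ipZr ip_inner).
by rewrite t_conj G_sym.
Qed.

Let Gh_T y : Gh (T y) = T (Gh y).
Proof. by rewrite /T (linmapB Gh_lin) (linmapZ Gh_lin) -!GhK. Qed.

Let T_ip_ge0 y : 0 <= ip (T y) y.
Proof. by rewrite /T (ipBl ip_inner) (ipZl ip_inner) subr_ge0. Qed.

Let T_ip_le y : ip (T y) y <= ip y y.
Proof.
rewrite /T (ipBl ip_inner) (ipZl ip_inner) lerBlDr lerDl.
by rewrite mulr_ge0 ?(ltW t_gt0) // -ip_GhGh ipxx_ge0.
Qed.

Let T_bounded : bounded_map ip ip T.
Proof.
split=> //; exists (1 + t * M); split=> [|y].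
  by rewrite addr_ge0 ?mulr_ge0 ?(ltW t_gt0).
apply: le_trans (ipnormD ip_inner _ _) _.
rewrite (ipnormN ip_inner) (ipnormZ ip_inner) gtr0_norm // mulrDl mul1r lerD2l.
by rewrite -mulrA ler_wpM2l ?(ltW t_gt0).
Qed.

Variable a : H.

Let r n := iter n T a.
Let c k := ip (r k) a.

Let ip_r m n : ip (r n) (r m) = c (n + m).
Proof.
elim: m n => [|m IHm] n; first by rewrite addn0.
by rewrite /r iterS -T_sym -iterS -/(r n.+1) -/(r m) IHm addSnnS.
Qed.

Let c_ge0 k : 0 <= c k.
Proof.
have [j [->|->]] := nat_even_or_odd k; first by rewrite -ip_r ipxx_ge0.
by rewrite -addSn -ip_r /r iterS T_ip_ge0.
Qed.

Let c_leS k : c k.+1 <= c k.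
Proof.
have [j [->|->]] := nat_even_or_odd k.
  by rewrite -addSn -!ip_r /r iterS T_ip_le.
rewrite -addSn -addnS -!ip_r /r !iterS; set y := iter j T a.
rewrite -subr_ge0 -(ipBr ip_inner).
(* y - T y = t G y, and <T y, G y> = <T (Gh y), Gh y> >= 0 *)
have -> : y - T y = t *: G y by rewrite /T opprB addrC subrK.
by rewrite (ipZr ip_inner) t_conj -GhK -Gh_sym Gh_T mulr_ge0 ?(ltW t_gt0).
Qed.

Let c_nonincr m n : (m <= n)%N -> c n <= c m.
Proof.
apply: (homo_leq (f := c) (r := fun p q => q <= p)) => [p|q p s qp sq|k].
- exact: lexx.
- exact: le_trans sq qp.
- exact: c_leS.
Qed.

(* |r n - r m|^2 = (c (2n) - c (n+m)) + (c (2m) - c (n+m)), and c nearly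
   attains its infimum at some index N *)
Let r_cauchy : cauchy_seq ip r.
Proof.
move=> e e_gt0.
have [N HN] := exists_near_inf c_ge0 (divr_gt0 (exprn_gt0 2 e_gt0) (ltr0n _ 2)).
exists N => n m Nn Nm.
rewrite -(ltr_pXn2r (isT : (0 < 2)%N)) ?nnegrE ?ipnorm_ge0 ?ltW //.
rewrite ipnorm_sq !(ipBl ip_inner, ipBr ip_inner) !ip_r (addnC m n).
have -> : c (n + n) - c (n + m) - (c (n + m) - c (m + m)) =
  (c (n + n) - c (n + m)) + (c (m + m) - c (n + m)) by ring.
rewrite [X in _ < X]splitr; apply: ltrD; rewrite ltrBlDl.
  by apply: le_lt_trans (HN _); apply/c_nonincr/(leq_trans Nn)/leq_addr.
by apply: le_lt_trans (HN _); apply/c_nonincr/(leq_trans Nm)/leq_addr.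
Qed.

Let r_conv0 : seq_conv ip r 0.
Proof.
have [l r_l] := proj2 ip_hilbert _ r_cauchy.
have Tl : T l = l.
  apply: (seq_conv_uniq ip_inner (bounded_map_seq_conv ip_inner T_bounded r_l)).
  exact: seq_convS r_l.
suff l0 : l = 0 by rewrite -l0.
apply/eqP; apply: contraT => l_neq0.
have : l - T l = t *: G l by rewrite /T opprB addrC subrK.
rewrite Tl subrr => /esym/eqP; rewrite scaler_eq0 gt_eqF //= => /eqP Gl0.
by have := G_pos l_neq0; rewrite Gl0 (ip0l ip_inner) ltxx.
Qed.

Lemma sqrt_range_approx : exists x : nat -> H, seq_conv ip (fun n => Gh (x n)) a.
Proof.
pose x n := \sum_(k < n) t *: Gh (r k).
have a_sub n : a - Gh (x n) = r n.
  elim: n => [|n IHn]; first by rewrite /x big_ord0 (linmap0 Gh_lin) subr0.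
  rewrite /x big_ord_recr /= (linmapD Gh_lin) (linmapZ Gh_lin) GhK.
  by rewrite opprD addrA -/(x n) IHn.
exists x => e /r_conv0[N HN]; exists N => n /HN.
by rewrite -a_sub subr0 (ipnormB ip_inner).
Qed.

End SqrtRangeDense.

Section CompletionRepresentation.
Variables (R : realType) (H K : lmodType R[i]).
Variables (ip : H -> H -> R[i]) (ipK : K -> K -> R[i]).
Variables (G Gh : H -> H) (iota : H -> K) (Gt : K -> H).
Hypotheses (ip_hilbert : hilbert ip) (G_metric : bounded_metric_operator ip G).
Hypothesis Gh_sqrt : positive_sqrt ip G Gh.
Hypothesis iota_completion : completion ip G ipK iota.
Hypothesis Gt_ext : continuous_extension ip G ipK iota Gt.

Lemma completion_sqrt_repr a :
  exists eta, Gt eta = Gh a /\ forall y, ipK (iota y) eta = ip y (Gh a).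
Proof.
have ip_inner : inner_product ip by case: ip_hilbert.
have [[[_ [M [M_ge0 G_le]]] G_sym] _] := G_metric.
have [[Gh_bounded Gh_sym] _ GhK] := Gh_sqrt.
have [[ipK_inner ipK_complete] iota_lin iota_ip _] := iota_completion.
have [Gt_bounded Gt_iota] := Gt_ext.
have [x Ghx_a] := sqrt_range_approx ip_hilbert G_metric Gh_sqrt M_ge0 G_le a.
have iotax_cauchy : cauchy_seq ipK (fun n => iota (x n)).
  move=> e /(seq_conv_cauchy ip_inner Ghx_a)[N HN]; exists N => m n Nm Nn.
  rewrite /ipnorm -(linmapB iota_lin) iota_ip -GhK Gh_sym.
  by rewrite (linmapB (proj1 Gh_bounded)) HN.
have [eta iotax_eta] := ipK_complete _ iotax_cauchy.
have Gx_Gha : seq_conv ip (fun n => G (x n)) (Gh a).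
  apply: (eq_seq_conv (u := fun n => Gh (Gh (x n)))) => [n|].
    by rewrite GhK.
  exact: (bounded_map_seq_conv (f := Gh) ip_inner Gh_bounded Ghx_a).
exists eta; split.
  have := bounded_map_seq_conv ipK_inner Gt_bounded iotax_eta.
  move/(seq_conv_uniq ip_inner); apply.
  by apply: eq_seq_conv Gx_Gha => n; rewrite Gt_iota.
move=> y; apply: (seq_conv_ip_eq ipK_inner ip_inner iotax_eta Gx_Gha) => n.
by rewrite iota_ip G_sym.
Qed.

End CompletionRepresentation.

Unset Implicit Arguments.

Theorem mainTheorem6
  (R : realType) (H K : lmodType R[i])
  (ip : H -> H -> R[i]) (ipK : K -> K -> R[i])
  (G Gh : H -> H) (iota : H -> K) (Gt : K -> H)
  (D : H -> Prop) (S : H -> H) :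
  hilbert ip ->
  bounded_metric_operator ip G ->
  positive_sqrt ip G Gh ->
  completion ip G ipK iota ->
  continuous_extension ip G ipK iota Gt ->
  densely_defined ip D S ->
  closed_op ip D S ->
  forall zeta Sstar_zeta : H,
    adjoint ip D S zeta Sstar_zeta ->
    dom_inv_sqrt Gh zeta ->
    dom_inv_sqrt Gh Sstar_zeta ->
  exists eta w : K,
    sharp ipK iota D S eta w /\
    Gt eta = zeta /\
    adjoint ip D S (Gt eta) (Gt w) /\
    Gt w = Sstar_zeta.
Proof.
(* S need not be closed nor densely defined for this *)
move=> ip_hilbert G_metric Gh_sqrt iota_completion Gt_ext _ _ zeta Sstar_zeta
  zeta_adj [a zetaE] [b SzetaE]; subst zeta Sstar_zeta.
have repr := completion_sqrt_repr ip_hilbert G_metric Gh_sqrt iota_completion Gt_ext.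
have [eta [Gt_eta eta_ip]] := repr a; have [w [Gt_w w_ip]] := repr b.
exists eta, w; rewrite Gt_eta Gt_w; split; last by [].
by move=> x Dx; rewrite eta_ip w_ip; apply: zeta_adj.
Qed.
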